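(* Any surface $S$ of the class $\Gamma$ has the following properties: $1)$ the parametric lines are principal lines; $2)$ the family $\mathcal F_1$ of $u$-lines ($v=\mathrm{const}$) consists of geodesics.
   Context: Let $c_2: x=x(v),\ v\in J_2$, be a smooth regular curve in Euclidean space $\mathbb R^3$ parameterized by arc length, with unit tangent $t(v)$, principal normal $n(v)$, binormal $b(v)$, curvature $\kappa(v)>0$ and torsion $\tau(v)$. Put $\theta(v)=-\int_0^v\tau\,dv$ and $e_1=\cos\theta\, n+\sin\theta\, b$, $e_2=-\sin\theta\, n+\cos\theta\, b$ (an orthonormal pair of torse-forming normals along $c_2$, i.e. $e_i'$ is proportional to $t$). Let $\lambda(u),\mu(u)$, $u\in J_1$, be functions with $\dot\lambda^2+\dot\mu^2=1$, $\lambda(0)=\mu(0)=0$, $\dot\lambda(0)=1$, $\dot\mu(0)=0$, so that $u\mapsto(\lambda(u),\mu(u))$ is a plane curve $c_1$ parameterized by arc length with plane curvature $\kappa_1(u)\neq 0$. Consider the surface $S: Z(u,v)=x(v)+\lambda(u)e_1(v)+\mu(u)e_2(v)$, $u\in J_1$, $v\in J_2$, at the points where $\lambda\cos\theta-\mu\sin\theta\neq 1/\kappa$, oriented by the unit normal $l=-\dot\mu\, e_1+\dot\lambda\, e_2$. The class $\Gamma$ is the class of all such surfaces. A family of parametric lines is called principal if its lines are lines of curvature; $\mathcal F_1$ denotes the family of $u$-parameter lines and $\mathcal F_2$ the family of $v$-parameter lines. *)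

From Stdlib Require Import Reals.
From Coquelicot Require Import Coquelicot.
Open Scope R_scope.

Definition vec := (R * R * R)%type.
Definition vx (a : vec) : R := fst (fst a).
Definition vy (a : vec) : R := snd (fst a).
Definition vz (a : vec) : R := snd a.
Definition vmk (a b c : R) : vec := (a, b, c).
Definition vadd (a b : vec) : vec := vmk (vx a + vx b) (vy a + vy b) (vz a + vz b).
Definition vscal (k : R) (a : vec) : vec := vmk (k * vx a) (k * vy a) (k * vz a).
Definition dot (a b : vec) : R := vx a * vx b + vy a * vy b + vz a * vz b.
Definition cross (a b : vec) : vec :=
  vmk (vy a * vz b - vz a * vy b) (vz a * vx b - vx a * vz b) (vx a * vy b - vy a * vx b).

Definition vderive (f : R -> vec) (s : R) : vec :=
  vmk (Derive (fun r => vx (f r)) s) (Derive (fun r => vy (f r)) s)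
      (Derive (fun r => vz (f r)) s).
Definition has_vderive (f : R -> vec) (s : R) (d : vec) : Prop :=
  is_derive (fun r => vx (f r)) s (vx d) /\
  is_derive (fun r => vy (f r)) s (vy d) /\
  is_derive (fun r => vz (f r)) s (vz d).

Definition in_open (a b : Rbar) (s : R) : Prop := Rbar_lt a s /\ Rbar_lt s b.

Definition theta (tau : R -> R) (v : R) : R := - RInt tau 0 v.

Definition e1 (tau : R -> R) (n b : R -> vec) (v : R) : vec :=
  vadd (vscal (cos (theta tau v)) (n v)) (vscal (sin (theta tau v)) (b v)).
Definition e2 (tau : R -> R) (n b : R -> vec) (v : R) : vec :=
  vadd (vscal (- sin (theta tau v)) (n v)) (vscal (cos (theta tau v)) (b v)).

Definition Zsurf (x n b : R -> vec) (tau lam mu : R -> R) (u v : R) : vec :=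
  vadd (x v) (vadd (vscal (lam u) (e1 tau n b v)) (vscal (mu u) (e2 tau n b v))).

Definition lnormal (n b : R -> vec) (tau lam mu : R -> R) (u v : R) : vec :=
  vadd (vscal (- Derive mu u) (e1 tau n b v)) (vscal (Derive lam u) (e2 tau n b v)).

Definition d_u (F : R -> R -> vec) (u v : R) : vec := vderive (fun s => F s v) u.
Definition d_v (F : R -> R -> vec) (u v : R) : vec := vderive (fun s => F u s) v.

(** The u-lines (v = const) are lines of curvature on the part [D] of the surface
    [Z] with unit normal [N]: at each point, Z_u is a principal direction, i.e.
    an eigenvector of the shape operator (Rodrigues: N_u = k Z_u for some k). *)
Definition u_lines_principal (Z N : R -> R -> vec) (D : R -> R -> Prop) : Prop :=
  forall u v, D u v -> exists k : R, d_u N u v = vscal k (d_u Z u v).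
Definition v_lines_principal (Z N : R -> R -> vec) (D : R -> R -> Prop) : Prop :=
  forall u v, D u v -> exists k : R, d_v N u v = vscal k (d_v Z u v).

(** The u-lines, parametrized by u, are geodesics: their acceleration Z_uu
    is normal to the surface at every point of [D]. *)
Definition u_lines_geodesic (Z N : R -> R -> vec) (D : R -> R -> Prop) : Prop :=
  forall u v, D u v -> exists c : R, d_u (d_u Z) u v = vscal c (N u v).

(* Differentiating the frame (e1, e2, t) of the surface: the normals e1, e2 are
   torse-forming (e1' = -kappa cos(theta) t, e2' = kappa sin(theta) t), so
   Z_v and l_v are both multiples of t, which makes the v-lines principal.
   Along a u-line v is fixed, so Z_u = lambda' e1 + mu' e2 and
   l_u, Z_uu are obtained by differentiating the plane curve (lambda, mu)
   alone; the Frenet equations of a unit-speed plane curve,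
   (lambda'', mu'') = k1 (-mu', lambda'), give l_u = -k1 Z_u and Z_uu = k1 l. *)
From Stdlib Require Import Reals Lra.
From Coquelicot Require Import Coquelicot.
Open Scope R_scope.

(* Coquelicot states these rules with [plus], [scal] and [opp] of a normed
   module, which do not unify with the operators of R; these are the R forms. *)
Lemma is_derive_Rplus (f g : R -> R) (x df dg : R) :
  is_derive f x df -> is_derive g x dg -> is_derive (fun r => f r + g r) x (df + dg).
Proof. intros Hf Hg. exact (is_derive_plus f g x df dg Hf Hg). Qed.

Lemma is_derive_Rmult (f g : R -> R) (x df dg : R) :
  is_derive f x df -> is_derive g x dg ->
  is_derive (fun r => f r * g r) x (df * g x + f x * dg).
Proof. intros Hf Hg. exact (is_derive_mult f g x df dg Hf Hg Rmult_comm). Qed.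

Lemma is_derive_Ropp (f : R -> R) (x df : R) :
  is_derive f x df -> is_derive (fun r => - f r) x (- df).
Proof. intros Hf. exact (is_derive_opp f x df Hf). Qed.

Lemma is_derive_Rconst (c x : R) : is_derive (fun _ => c) x 0.
Proof. exact (is_derive_const c x). Qed.

Lemma is_derive_Rcomp (f g : R -> R) (x df dg : R) :
  is_derive f (g x) df -> is_derive g x dg -> is_derive (fun r => f (g r)) x (dg * df).
Proof. intros Hf Hg. exact (is_derive_comp f g x df dg Hf Hg). Qed.

Ltac vec_ring :=
  unfold vadd, vscal, vmk, vx, vy, vz; cbn [fst snd]; f_equal; [f_equal|]; ring.

Lemma vscal_assoc (a c : R) (w : vec) : vscal a (vscal c w) = vscal (a * c) w.
Proof. vec_ring. Qed.

Lemma vscal_proportional (a c : R) (w : vec) :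
  c <> 0 -> vscal a w = vscal (a / c) (vscal c w).
Proof. intros Hc. rewrite vscal_assoc. f_equal. field. exact Hc. Qed.

Lemma has_vderive_plus (f g : R -> vec) (s : R) (df dg : vec) :
  has_vderive f s df -> has_vderive g s dg ->
  has_vderive (fun r => vadd (f r) (g r)) s (vadd df dg).
Proof.
  intros [A [B C]] [A' [B' C']]; split; [|split]; apply is_derive_Rplus; assumption.
Qed.

Lemma has_vderive_scal (g : R -> R) (f : R -> vec) (s dg : R) (df : vec) :
  is_derive g s dg -> has_vderive f s df ->
  has_vderive (fun r => vscal (g r) (f r)) s (vadd (vscal dg (f s)) (vscal (g s) df)).
Proof.
  intros Hg [A [B C]]; split; [|split]; apply is_derive_Rmult; assumption.
Qed.

Lemma has_vderive_const (c : vec) (s : R) : has_vderive (fun _ => c) s (vmk 0 0 0).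
Proof. split; [|split]; apply is_derive_Rconst. Qed.

Lemma has_vderive_ext (f : R -> vec) (s : R) (d d' : vec) :
  has_vderive f s d -> d = d' -> has_vderive f s d'.
Proof. intros H <-; exact H. Qed.

Lemma vderive_unique (f : R -> vec) (s : R) (d : vec) : has_vderive f s d -> vderive f s = d.
Proof.
  intros [A [B C]]; unfold vderive.
  assert (Dx : Derive (fun r => vx (f r)) s = vx d) by exact (is_derive_unique _ _ _ A).
  assert (Dy : Derive (fun r => vy (f r)) s = vy d) by exact (is_derive_unique _ _ _ B).
  assert (Dz : Derive (fun r => vz (f r)) s = vz d) by exact (is_derive_unique _ _ _ C).
  rewrite Dx, Dy, Dz. destruct d as [[? ?] ?]; reflexivity.
Qed.

Lemma has_vderive_ext_loc (f g : R -> vec) (s : R) (d : vec) :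
  locally s (fun r => f r = g r) -> has_vderive f s d -> has_vderive g s d.
Proof.
  intros L [A [B C]].
  assert (K : forall h : vec -> R, locally s (fun r => h (f r) = h (g r))).
  { intro h. eapply filter_imp; [|exact L]. intros r E; rewrite E; reflexivity. }
  split; [|split];
    [exact (is_derive_ext_loc _ _ _ _ (K vx) A) | exact (is_derive_ext_loc _ _ _ _ (K vy) B)
    | exact (is_derive_ext_loc _ _ _ _ (K vz) C)].
Qed.

Lemma has_vderive_comb (f g : R -> R) (A B : vec) (s : R) :
  ex_derive f s -> ex_derive g s ->
  has_vderive (fun r => vadd (vscal (f r) A) (vscal (g r) B)) s
    (vadd (vscal (Derive f s) A) (vscal (Derive g s) B)).
Proof.
  intros Hf Hg. eapply has_vderive_ext.
  - apply has_vderive_plus; apply has_vderive_scal;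
      [apply Derive_correct, Hf | apply has_vderive_const
      | apply Derive_correct, Hg | apply has_vderive_const].
  - vec_ring.
Qed.

Lemma locally_in_open (a b : Rbar) (s : R) : in_open a b s -> locally s (in_open a b).
Proof. intros H. exact (open_and _ _ (open_Rbar_gt a) (open_Rbar_lt b) s H). Qed.

Lemma in_open_between (a b : Rbar) (p q z : R) :
  in_open a b p -> in_open a b q -> p <= z <= q -> in_open a b z.
Proof.
  intros [H1 H2] [H3 H4] [H5 H6]; split.
  - destruct a; simpl in *; auto; lra.
  - destruct b; simpl in *; auto; lra.
Qed.

Lemma is_derive_theta (a b : Rbar) (tau : R -> R) (v : R) :
  in_open a b 0 -> (forall s, in_open a b s -> continuous tau s) ->
  in_open a b v -> is_derive (theta tau) v (- tau v).
Proof.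
  intros H0 Htau Hv. unfold theta. apply is_derive_Ropp.
  apply (is_derive_RInt tau (fun y => RInt tau 0 y) 0 v); [|exact (Htau v Hv)].
  eapply filter_imp; [|exact (locally_in_open _ _ _ Hv)]. intros y Hy.
  apply (RInt_correct (V := R_CompleteNormedModule)).
  apply (ex_RInt_continuous (V := R_CompleteNormedModule)). intros z Hz. apply Htau.
  destruct (Rle_dec 0 y) as [Hle|Hle].
  - rewrite Rmin_left, Rmax_right in Hz by lra. exact (in_open_between _ _ _ _ _ H0 Hy Hz).
  - rewrite Rmin_right, Rmax_left in Hz by lra. exact (in_open_between _ _ _ _ _ Hy H0 Hz).
Qed.

Section TorseFormingNormals.

Variables (a b : Rbar) (t n bn : R -> vec) (kappa tau : R -> R).
Hypothesis H0 : in_open a b 0.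
Hypothesis Htau : forall v, in_open a b v -> continuous tau v.
Hypothesis Hn : forall v, in_open a b v ->
  has_vderive n v (vadd (vscal (- kappa v) (t v)) (vscal (tau v) (bn v))).
Hypothesis Hb : forall v, in_open a b v -> has_vderive bn v (vscal (- tau v) (n v)).

(* theta' = -tau is exactly what cancels the torsion terms. *)
Lemma has_vderive_e1 v : in_open a b v ->
  has_vderive (e1 tau n bn) v (vscal (- kappa v * cos (theta tau v)) (t v)).
Proof.
  intros Hv. pose proof (is_derive_theta _ _ _ _ H0 Htau Hv) as Hth.
  eapply has_vderive_ext.
  - apply has_vderive_plus; apply has_vderive_scal;
      [apply (is_derive_Rcomp cos) | exact (Hn v Hv)
      | apply (is_derive_Rcomp sin) | exact (Hb v Hv)];
      [apply is_derive_cos | exact Hth | apply is_derive_sin | exact Hth].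
  - vec_ring.
Qed.

Lemma has_vderive_e2 v : in_open a b v ->
  has_vderive (e2 tau n bn) v (vscal (kappa v * sin (theta tau v)) (t v)).
Proof.
  intros Hv. pose proof (is_derive_theta _ _ _ _ H0 Htau Hv) as Hth.
  eapply has_vderive_ext.
  - apply has_vderive_plus; apply has_vderive_scal;
      [apply is_derive_Ropp; apply (is_derive_Rcomp sin) | exact (Hn v Hv)
      | apply (is_derive_Rcomp cos) | exact (Hb v Hv)];
      [apply is_derive_sin | exact Hth | apply is_derive_cos | exact Hth].
  - vec_ring.
Qed.

Variables (x : R -> vec) (lam mu : R -> R).
Hypothesis Hx : forall v, in_open a b v -> has_vderive x v (t v).

Lemma Zsurf_dv u v : in_open a b v ->
  d_v (Zsurf x n bn tau lam mu) u v =
  vscal (1 - kappa v * (lam u * cos (theta tau v) - mu u * sin (theta tau v))) (t v).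
Proof.
  intros Hv. apply vderive_unique. eapply has_vderive_ext.
  - apply (has_vderive_plus x); [exact (Hx v Hv)|].
    apply has_vderive_plus; (apply has_vderive_scal; [apply is_derive_Rconst|]);
      [exact (has_vderive_e1 v Hv) | exact (has_vderive_e2 v Hv)].
  - vec_ring.
Qed.

Lemma lnormal_dv u v : in_open a b v ->
  d_v (lnormal n bn tau lam mu) u v =
  vscal (kappa v * (Derive mu u * cos (theta tau v) + Derive lam u * sin (theta tau v)))
    (t v).
Proof.
  intros Hv. apply vderive_unique. eapply has_vderive_ext.
  - apply has_vderive_plus; (apply has_vderive_scal; [apply is_derive_Rconst|]);
      [exact (has_vderive_e1 v Hv) | exact (has_vderive_e2 v Hv)].
  - vec_ring.
Qed.

End TorseFormingNormals.

Lemma Zsurf_du (x n b : R -> vec) (tau lam mu : R -> R) (u v : R) :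
  ex_derive lam u -> ex_derive mu u ->
  d_u (Zsurf x n b tau lam mu) u v =
  vadd (vscal (Derive lam u) (e1 tau n b v)) (vscal (Derive mu u) (e2 tau n b v)).
Proof.
  intros Hl Hm. apply vderive_unique. eapply has_vderive_ext.
  - apply (has_vderive_plus (fun _ => x v)); [apply has_vderive_const|].
    exact (has_vderive_comb _ _ _ _ _ Hl Hm).
  - vec_ring.
Qed.

Lemma Zsurf_duu (x n b : R -> vec) (tau lam mu : R -> R) (u v : R) :
  locally u (fun s => ex_derive lam s /\ ex_derive mu s) ->
  ex_derive (Derive lam) u -> ex_derive (Derive mu) u ->
  d_u (d_u (Zsurf x n b tau lam mu)) u v =
  vadd (vscal (Derive (Derive lam) u) (e1 tau n b v))
       (vscal (Derive (Derive mu) u) (e2 tau n b v)).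
Proof.
  intros Hloc Hl Hm. apply vderive_unique.
  eapply has_vderive_ext_loc; [|exact (has_vderive_comb _ _ _ _ _ Hl Hm)].
  eapply filter_imp; [|exact Hloc]. intros s [Hls Hms].
  rewrite (Zsurf_du x n b tau lam mu s v Hls Hms); reflexivity.
Qed.

Lemma lnormal_du (n b : R -> vec) (tau lam mu : R -> R) (u v : R) :
  ex_derive (Derive lam) u -> ex_derive (Derive mu) u ->
  d_u (lnormal n b tau lam mu) u v =
  vadd (vscal (- Derive (Derive mu) u) (e1 tau n b v))
       (vscal (Derive (Derive lam) u) (e2 tau n b v)).
Proof.
  intros Hl Hm. apply vderive_unique. eapply has_vderive_ext.
  - apply (has_vderive_plus (fun s => vscal (- Derive mu s) (e1 tau n b v))
                            (fun s => vscal (Derive lam s) (e2 tau n b v)));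
      (apply has_vderive_scal; [|apply has_vderive_const]).
    + apply is_derive_Ropp, Derive_correct, Hm.
    + apply Derive_correct, Hl.
  - vec_ring.
Qed.

Definition plane_curvature (lam mu : R -> R) (u : R) : R :=
  Derive lam u * Derive (Derive mu) u - Derive (Derive lam) u * Derive mu u.

Section UnitSpeedPlaneCurve.

Variables (a b : Rbar) (lam mu : R -> R).
Hypothesis Hlam : forall u, in_open a b u -> ex_derive lam u /\ ex_derive (Derive lam) u.
Hypothesis Hmu : forall u, in_open a b u -> ex_derive mu u /\ ex_derive (Derive mu) u.
Hypothesis Hunit : forall u, in_open a b u -> Derive lam u ^ 2 + Derive mu u ^ 2 = 1.

Lemma unit_speed_acceleration_orth u : in_open a b u ->
  Derive lam u * Derive (Derive lam) u + Derive mu u * Derive (Derive mu) u = 0.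
Proof.
  intros Hu.
  assert (Hspeed :
    is_derive (fun r => Derive lam r * Derive lam r + Derive mu r * Derive mu r) u
    (Derive (Derive lam) u * Derive lam u + Derive lam u * Derive (Derive lam) u +
     (Derive (Derive mu) u * Derive mu u + Derive mu u * Derive (Derive mu) u))).
  { apply is_derive_Rplus; apply is_derive_Rmult; apply Derive_correct;
      first [exact (proj2 (Hlam u Hu)) | exact (proj2 (Hmu u Hu))]. }
  assert (Hconst : is_derive
    (fun r => Derive lam r * Derive lam r + Derive mu r * Derive mu r) u 0).
  { apply (is_derive_ext_loc (fun _ => 1)); [|apply is_derive_Rconst].
    eapply filter_imp; [|exact (locally_in_open _ _ _ Hu)].
    intros r Hr. rewrite <- (Hunit r Hr). simpl. ring. }
  pose proof (is_derive_unique _ _ _ Hspeed) as E.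
  rewrite (is_derive_unique _ _ _ Hconst) in E. lra.
Qed.

Lemma unit_speed_frenet u : in_open a b u ->
  Derive (Derive lam) u = - plane_curvature lam mu u * Derive mu u /\
  Derive (Derive mu) u = plane_curvature lam mu u * Derive lam u.
Proof.
  intros Hu. pose proof (unit_speed_acceleration_orth u Hu) as O.
  pose proof (Hunit u Hu) as U. unfold plane_curvature.
  set (p := Derive lam u) in *; set (q := Derive mu u) in *.
  set (p2 := Derive (Derive lam) u) in *; set (q2 := Derive (Derive mu) u) in *.
  split.
  - assert (E : p2 + (p * q2 - p2 * q) * q =
                 p2 * (1 - (p ^ 2 + q ^ 2)) + p * (p * p2 + q * q2)) by ring.
    rewrite U, O in E. lra.
  - assert (E : q2 - (p * q2 - p2 * q) * p =
                 q2 * (1 - (p ^ 2 + q ^ 2)) + q * (p * p2 + q * q2)) by ring.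
    rewrite U, O in E. lra.
Qed.

End UnitSpeedPlaneCurve.

Theorem lemma2p1
  (a1 b1 a2 b2 : Rbar)
  (x t n b : R -> vec) (kappa tau lam mu : R -> R)
  (HJ1 : in_open a1 b1 0) (HJ2 : in_open a2 b2 0)
  (Hx : forall v, in_open a2 b2 v -> has_vderive x v (t v))
  (Ht : forall v, in_open a2 b2 v -> has_vderive t v (vscal (kappa v) (n v)))
  (Hn : forall v, in_open a2 b2 v ->
          has_vderive n v (vadd (vscal (- kappa v) (t v)) (vscal (tau v) (b v))))
  (Hb : forall v, in_open a2 b2 v -> has_vderive b v (vscal (- tau v) (n v)))
  (Hortho : forall v, in_open a2 b2 v ->
     dot (t v) (t v) = 1 /\ dot (n v) (n v) = 1 /\ dot (b v) (b v) = 1 /\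
     dot (t v) (n v) = 0 /\ dot (t v) (b v) = 0 /\ dot (n v) (b v) = 0)
  (Hbtn : forall v, in_open a2 b2 v -> b v = cross (t v) (n v))
  (Hkappa : forall v, in_open a2 b2 v -> 0 < kappa v)
  (Htau : forall v, in_open a2 b2 v -> continuous tau v)
  (Hlam : forall u, in_open a1 b1 u -> ex_derive lam u /\ ex_derive (Derive lam) u)
  (Hmu : forall u, in_open a1 b1 u -> ex_derive mu u /\ ex_derive (Derive mu) u)
  (Hunit : forall u, in_open a1 b1 u -> (Derive lam u) ^ 2 + (Derive mu u) ^ 2 = 1)
  (Hinit : lam 0 = 0 /\ mu 0 = 0 /\ Derive lam 0 = 1 /\ Derive mu 0 = 0)
  (Hk1 : forall u, in_open a1 b1 u ->
     Derive lam u * Derive (Derive mu) u - Derive (Derive lam) u * Derive mu u <> 0) :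
  let Z := Zsurf x n b tau lam mu in
  let l := lnormal n b tau lam mu in
  let D := fun u v => in_open a1 b1 u /\ in_open a2 b2 v /\
           lam u * cos (theta tau v) - mu u * sin (theta tau v) <> / kappa v in
  (u_lines_principal Z l D /\ v_lines_principal Z l D) /\ u_lines_geodesic Z l D.
Proof.
  intros Z l D.
  split; [split|]; intros u v [Hu [Hv Hreg]];
    destruct (Hlam u Hu) as [Hl Hl']; destruct (Hmu u Hu) as [Hm Hm'];
    destruct (unit_speed_frenet _ _ _ _ Hlam Hmu Hunit u Hu) as [Hl'' Hm''].
  - exists (- plane_curvature lam mu u).
    unfold Z, l. rewrite lnormal_du, Zsurf_du, Hl'', Hm'' by assumption. vec_ring.
  - assert (Hdenom :
      1 - kappa v * (lam u * cos (theta tau v) - mu u * sin (theta tau v)) <> 0).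
    { pose proof (Hkappa v Hv) as Hk. contradict Hreg.
      apply (Rmult_eq_reg_l (kappa v)); [|lra]. rewrite Rinv_r; lra. }
    unfold Z, l.
    rewrite (Zsurf_dv a2 b2 t n b kappa tau), (lnormal_dv a2 b2 t n b kappa tau)
      by assumption.
    eexists. exact (vscal_proportional _ _ _ Hdenom).
  - exists (plane_curvature lam mu u).
    assert (Hloc : locally u (fun s => ex_derive lam s /\ ex_derive mu s)).
    { eapply filter_imp; [|exact (locally_in_open _ _ _ Hu)].
      intros s Hs; split; [exact (proj1 (Hlam s Hs)) | exact (proj1 (Hmu s Hs))]. }
    unfold Z, l, lnormal. rewrite Zsurf_duu, Hl'', Hm'' by assumption. vec_ring.
Qed.
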